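(* Consider the continuous-time plant $\dot x=f(x,u)$, $x\in\mathbb{R}^n$, $u\in\mathbb{R}^m$, under zero-order hold and possibly nonuniform sampling, fed back with a control law $U:\mathbb{R}^n\times\mathbb{R}^q\times\mathbb{R}_{>0}\to\mathbb{R}^m$, yielding the exact closed-loop model $\bar F^e(x,e,T)=F^e(x,U(x,e,T),T)$. Assume: (A1) $f$ is locally Lipschitz in $x$ uniformly in $u$: for all compact $\mathcal{X}\subset\mathbb{R}^n$, $\mathcal{U}\subset\mathbb{R}^m$ there is $L>0$ with $|f(x,u)-f(y,u)|\le L|x-y|$ for $x,y\in\mathcal{X}$, $u\in\mathcal{U}$; (A2) $f$ is locally bounded: for every $M,C_u\ge0$ there exists $C_f(M,C_u)>0$, nondecreasing in each variable, with $|f(x,u)|\le C_f$ for $|x|\le M$, $|u|\le C_u$; (A3) $U$ is small-time locally uniformly bounded: for every $M,E\ge0$ there exist $T^u(M,E)>0$ (nonincreasing in each variable) and $C_u(M,E)>0$ (nondecreasing in each variable) with $|U(x,e,T)|\le C_u$ for all $|x|\le M$, $|e|\le E$, $T\in(0,T^u)$. Suppose further that: (i) there exists $\phi\in\mathcal{K}_\infty$ such that for every $E\ge0$ there exists $T^i(E)>0$ such that $|f(0,U(0,e,T))|\le\phi(|e|)$ for all $|e|\le E$, $T\in(0,T^i)$; (ii) for every $M,E\ge0$ there exist $K(M,E)>0$ and $T^{ii}(M,E)>0$, with $K$ nondecreasing and $T^{ii}$ nonincreasing in each variable, such that $|f(x^a,U(x^a,e,T))-f(x^b,U(x^b,e,T))|\le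 K|x^a-x^b|$ for all $|x^a|,|x^b|\le M$, $|e|\le E$, $T\in(0,T^{ii})$. Let $F^{RK}$ be any explicit and consistent Runge-Kutta model for $\dot x=f(x,u)$ and $\bar F^{RK}(x,e,T):=F^{RK}(x,U(x,e,T),T)$. Then the pair $(\bar F^{RK},\bar F^e)$ is REPC.
   Context: $F^e(\xi,u,T)$ denotes the exact discrete-time model: the value at time $T$ of the solution of $\dot x=f(x,u)$ with constant input $u$ starting from $x(0)=\xi$. An $s$-stage explicit Runge-Kutta model is $F^{RK}(x,u,T):=x+T\sum_{i=1}^s b_i f(y_i,u)$, where $y_1=x$ and $y_i=x+T\sum_{j=1}^{i-1}a_{ij}f(y_j,u)$ for $i=2,\dots,s$, with real coefficients $a_{ij},b_i$; it is consistent if $\sum_{i=1}^s b_i=1$. $\mathcal{K}_\infty$: continuous, strictly increasing, unbounded functions $\mathbb{R}_{\ge0}\to\mathbb{R}_{\ge0}$ vanishing at $0$. REPC: a model $\bar F^a$ is Robustly Equilibrium-Preserving Consistent with $\bar F^b$ (and the pair $(\bar F^a,\bar F^b)$ is called REPC) if there exists $\phi\in\mathcal{K}_\infty$ such that for each $M,E\ge0$ there exist constants $K>0$, $T^*>0$ and $\rho\in\mathcal{K}_\infty$ with $|\bar F^a(x^a,e,T)-\bar F^b(x^b,e,T)|\le(1+KT)|x^a-x^b|+T\rho(T)(\max\{|x^a|,|x^b|\}+\phi(|e|))$ for all $|x^a|,|x^b|\le M$, $|e|\le E$, $T\in(0,T^* )$. *)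

From HB Require Import structures.
From mathcomp Require Import all_boot all_order all_algebra.
From mathcomp Require Import all_classical all_reals all_analysis.
Set Implicit Arguments. Unset Strict Implicit. Unset Printing Implicit Defensive.
Import Order.TTheory GRing.Theory Num.Theory.
Import numFieldNormedType.Exports.
Local Open Scope classical_set_scope.
Local Open Scope ring_scope.

Section Defs.
Variable R : realType.

Definition enorm (k : nat) (v : 'rV[R]_k) : R :=
  Num.sqrt (\sum_(i < k) (v ord0 i) ^+ 2).

Definition Kinf (phi : R -> R) : Prop :=
  [/\ {within [set r : R | 0 <= r], continuous phi},
      (forall r s : R, 0 <= r -> r < s -> phi r < phi s),
      phi 0 = 0 &
      (forall c : R, exists r : R, 0 <= r /\ c < phi r)].

Variables (n m q : nat).

Definition is_solution (f : 'rV[R]_n -> 'rV[R]_m -> 'rV[R]_n)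
  (xi : 'rV[R]_n) (u : 'rV[R]_m) (T : R) (x : R -> 'rV[R]_n) : Prop :=
  [/\ x 0 = xi,
      {within [set t : R | 0 <= t <= T], continuous x} &
      (forall t : R, 0 < t < T -> is_derive t (1 : R) x (f (x t) u))].

(* exact discrete-time model F^e(xi,u,T) = x(T) (defined when a solution exists
   on [0,T]; an arbitrary value xi otherwise) *)
Definition exact_model (f : 'rV[R]_n -> 'rV[R]_m -> 'rV[R]_n)
  (xi : 'rV[R]_n) (u : 'rV[R]_m) (T : R) : 'rV[R]_n :=
  match pselect (exists x, is_solution f xi u T x) with
  | left h => (projT1 (cid h)) T
  | right _ => xi
  end.

(* stages y_1,...,y_k (indexed 0..k-1) of an explicit RK scheme with
   coefficients a i j (only j < i used) *)
Fixpoint rk_stages (f : 'rV[R]_n -> 'rV[R]_m -> 'rV[R]_n) (a : nat -> nat -> R)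
  (x : 'rV[R]_n) (u : 'rV[R]_m) (T : R) (k : nat) : seq 'rV[R]_n :=
  match k with
  | 0%N => [::]
  | k'.+1 => let ys := rk_stages f a x u T k' in
      rcons ys (x + T *: \sum_(j < k') (a k' j *: f (nth 0 ys j) u))
  end.

Definition rk_model (f : 'rV[R]_n -> 'rV[R]_m -> 'rV[R]_n) (s : nat)
  (a : nat -> nat -> R) (b : nat -> R)
  (x : 'rV[R]_n) (u : 'rV[R]_m) (T : R) : 'rV[R]_n :=
  x + T *: \sum_(i < s) (b i *: f (nth 0 (rk_stages f a x u T s) i) u).

Definition rk_consistent (s : nat) (b : nat -> R) : Prop :=
  \sum_(i < s) b i = 1.

Definition REPC (Fa Fb : 'rV[R]_n -> 'rV[R]_q -> R -> 'rV[R]_n) : Prop :=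
  exists phi : R -> R, Kinf phi /\
    forall M E : R, 0 <= M -> 0 <= E ->
      exists (K Ts : R) (rho : R -> R), 0 < K /\ 0 < Ts /\ Kinf rho /\
        forall (xa xb : 'rV[R]_n) (e : 'rV[R]_q) (T : R),
          enorm xa <= M -> enorm xb <= M -> enorm e <= E -> 0 < T < Ts ->
          enorm (Fa xa e T - Fb xb e T) <=
            (1 + K * T) * enorm (xa - xb) +
            T * rho T * (Num.max (enorm xa) (enorm xb) + phi (enorm e)).

End Defs.

(* Write [F^RK(xa) - F^e(xb)] as [(xa - xb) + T (fa - fb)] plus the local
   errors [F^RK(xa) - xa - T fa] and [F^e(xb) - xb - T fb], where
   [f* = f(x*, U(x*, e, T))].  By (ii) the first part is at most
   [(1 + K T) |xa - xb|].  The Runge-Kutta stages stay within [O(T |f(x)|)]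
   of [x], and so does the exact solution (a bootstrap argument with the mean
   value theorem), so, [f] being Lipschitz near [x] by (A1), both local errors
   are [O(T^2 |f*|)].  Finally (i) and (ii) give
   [|f*| <= (K + 1) (max |x*| + phi |e|)], which is REPC with [rho(T) = c T].
   Since the exact model falls back to [x] when no solution exists, the
   solution is constructed by Picard iteration in a box around [x]. *)

From HB Require Import structures.
From mathcomp Require Import all_boot all_order all_algebra.
From mathcomp Require Import all_classical all_reals all_analysis.
From mathcomp Require Import ring lra.
Import Order.TTheory GRing.Theory Num.Theory.
Import numFieldNormedType.Exports.
Local Open Scope classical_set_scope.
Local Open Scope ring_scope.

Set Implicit Arguments. Unset Strict Implicit. Unset Printing Implicit Defensive.

Section EuclideanNorm.
Variables (R : realType) (n : nat).
Implicit Types (v w : 'rV[R]_n).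

Lemma enorm_ge0 v : 0 <= enorm v.
Proof. exact: sqrtr_ge0. Qed.

Lemma sum_sqr_ge0 v : 0 <= \sum_(i < n) v ord0 i ^+ 2.
Proof. by apply: sumr_ge0 => i _; exact: sqr_ge0. Qed.

Lemma enorm_sqr v : enorm v ^+ 2 = \sum_(i < n) v ord0 i ^+ 2.
Proof. by rewrite sqr_sqrtr // sum_sqr_ge0. Qed.

Lemma enorm_le_sqr v c :
  0 <= c -> \sum_(i < n) v ord0 i ^+ 2 <= c ^+ 2 -> enorm v <= c.
Proof.
by move=> c0 le_vc; rewrite -(ger0_norm c0) -sqrtr_sqr ler_sqrt // sqr_ge0.
Qed.

Lemma coord_le_enorm v i : `|v ord0 i| <= enorm v.
Proof.
rewrite -sqrtr_sqr ler_sqrt ?sum_sqr_ge0 // (bigD1 i) //= lerDl.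
by apply: sumr_ge0 => j _; exact: sqr_ge0.
Qed.

Lemma coordB_le_enorm v w i : `|v ord0 i - w ord0 i| <= enorm (v - w).
Proof. by have := coord_le_enorm (v - w) i; rewrite !mxE. Qed.

Lemma enorm_le_coord v c : (forall i, `|v ord0 i| <= c) -> enorm v <= n%:R * c.
Proof.
move=> le_vc.
have [c0|cN] := leP 0 c; last first.
  case: n v le_vc => [|k] v le_vc; first by rewrite /enorm big_ord0 sqrtr0 mul0r.
  by have := le_trans (normr_ge0 _) (le_vc ord0); rewrite leNgt cN.
apply: enorm_le_sqr; first by rewrite mulr_ge0.
apply: (@le_trans _ _ ((\sum_(i < n) `|v ord0 i|) ^+ 2)).
  rewrite expr2 mulr_suml; apply: ler_sum => i _.
  rewrite -real_normK ?num_real // expr2 ler_wpM2l //.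
  by rewrite (bigD1 i) //= lerDl sumr_ge0.
rewrite ler_sqr ?nnegrE ?mulr_ge0 ?sumr_ge0 //.
by rewrite mulr_natl -[n in _ *+ n]card_ord -sumr_const ler_sum.
Qed.

Lemma enorm0 : enorm (0 : 'rV[R]_n) = 0.
Proof. by rewrite /enorm big1 ?sqrtr0 // => i _; rewrite mxE expr0n. Qed.

Lemma enormN v : enorm (- v) = enorm v.
Proof. by rewrite /enorm; under eq_bigr do rewrite mxE sqrrN. Qed.

Lemma enormZ c v : enorm (c *: v) = `|c| * enorm v.
Proof.
rewrite /enorm; under eq_bigr do rewrite mxE exprMn.
by rewrite -mulr_sumr sqrtrM ?sqr_ge0 // sqrtr_sqr.
Qed.

Lemma enorm_coord_eq0 v i : enorm v = 0 -> v ord0 i = 0.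
Proof. by move=> v0; apply/normr0_eq0/le_anti; rewrite normr_ge0 -v0 coord_le_enorm. Qed.

Lemma dot_le_enorm v w :
  \sum_(i < n) v ord0 i * w ord0 i <= enorm v * enorm w.
Proof.
have [v0|v_neq0] := eqVneq (enorm v) 0.
  by rewrite v0 mul0r big1 // => i _; rewrite enorm_coord_eq0 ?mul0r.
have [w0|w_neq0] := eqVneq (enorm w) 0.
  by rewrite w0 mulr0 big1 // => i _; rewrite (enorm_coord_eq0 i w0) mulr0.
have vp : 0 < enorm v by rewrite lt0r v_neq0 enorm_ge0.
have wp : 0 < enorm w by rewrite lt0r w_neq0 enorm_ge0.
pose k := enorm w / enorm v.
have kp : 0 < k by rewrite divr_gt0.
(* AM-GM with weight [k]: [2 v_i w_i <= k v_i^2 + w_i^2 / k], summed over [i]. *)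
have amgm i : 2 * (v ord0 i * w ord0 i) <= k * v ord0 i ^+ 2 + k^-1 * w ord0 i ^+ 2.
  rewrite -(ler_pM2l kp) -subr_ge0.
  have -> : k * (k * v ord0 i ^+ 2 + k^-1 * w ord0 i ^+ 2) - k * (2 * (v ord0 i * w ord0 i))
      = (k * v ord0 i - w ord0 i) ^+ 2 by field; rewrite gt_eqF.
  exact: sqr_ge0.
have : \sum_(i < n) 2 * (v ord0 i * w ord0 i)
    <= \sum_(i < n) (k * v ord0 i ^+ 2 + k^-1 * w ord0 i ^+ 2).
  by apply: ler_sum => i _; exact: amgm.
rewrite -mulr_sumr big_split /= -!mulr_sumr -!enorm_sqr.
have -> : k * enorm v ^+ 2 + k^-1 * enorm w ^+ 2 = 2 * (enorm v * enorm w).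
  by rewrite /k; field; rewrite gt_eqF.
by rewrite ler_pM2l.
Qed.

Lemma enormD v w : enorm (v + w) <= enorm v + enorm w.
Proof.
apply: enorm_le_sqr; first by rewrite addr_ge0 ?enorm_ge0.
under eq_bigr do rewrite mxE sqrrD.
rewrite !big_split /= -mulr2n -!enorm_sqr sqrrD lerD2r lerD2l.
by rewrite lerMn2r dot_le_enorm orbT.
Qed.

Lemma enorm_sum (I : finType) (F : I -> 'rV[R]_n) :
  enorm (\sum_i F i) <= \sum_i enorm (F i).
Proof.
elim/big_ind2 : _ => [|x1 x2 y1 y2 le1 le2|//]; first by rewrite enorm0.
exact: le_trans (enormD _ _) (lerD le1 le2).
Qed.

Lemma enorm_le_mx_norm v : enorm v <= n%:R * `|v|.
Proof.
apply: enorm_le_coord => i; rewrite [leRHS]/Num.Def.normr /= mx_normrE.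
exact: (le_bigmax _ _ (ord0, i)).
Qed.

Lemma ler_dist_enorm v w : `|enorm v - enorm w| <= enorm (v - w).
Proof.
have tri (a b : 'rV[R]_n) : enorm a - enorm b <= enorm (a - b).
  by rewrite lerBlDr (le_trans _ (enormD _ _)) // subrK.
by rewrite ler_norml tri andbT lerNl opprB (le_trans (tri w v)) // -enormN opprB.
Qed.

End EuclideanNorm.

Section RealAnalysis.
Variable R : realType.

Lemma within_continuous_enorm n (A : set R) (x : R -> 'rV[R]_n) (x0 : 'rV[R]_n) :
  {within A, continuous x} -> {within A, continuous (fun s => enorm (x s - x0))}.
Proof.
move=> xc; apply/subspace_continuousP => t At.
have n1 : 0 < n%:R + 1 :> R by rewrite ltr_pwDr.
apply/cvgrPdist_le => e e0.
have ep : 0 < e / (n%:R + 1) by rewrite divr_gt0.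
have [/= d d0 near_t] := (cvgrPdist_lt _ _).1 ((subspace_continuousP _ _).1 xc t At) _ ep.
exists d => // s ts As; have /ltW near_ts := near_t s ts As.
apply: le_trans (ler_dist_enorm _ _) _.
rewrite opprB addrA subrK; apply: le_trans (enorm_le_mx_norm _) _.
apply: le_trans (_ : (n%:R + 1) * `|x t - x s| <= e); first by rewrite ler_wpM2r // lerDl.
by rewrite mulrC -ler_pdivlMr.
Qed.

Lemma lipschitz_continuous (g : R -> R) (k : R) :
  (forall s t, `|g s - g t| <= k * `|s - t|) -> continuous g.
Proof.
move=> g_lip t; apply/cvgrPdist_le => e e0.
have k1 : 0 < `|k| + 1 by rewrite ltr_pwDr.
near=> s; apply: le_trans (g_lip t s) _.
apply: le_trans (_ : (`|k| + 1) * `|t - s| <= e).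
  by rewrite ler_wpM2r // (le_trans (ler_norm _)) // lerDl.
rewrite mulrC -ler_pdivlMr // ltW //; near: s.
by apply/nbhs_normP; exists (e / (`|k| + 1)); [rewrite /= divr_gt0 | move=> s].
Unshelve. all: by end_near. Qed.

Lemma continuous_row n (h : 'I_n -> R -> R) t :
  (forall i, {for t, continuous (h i)}) ->
  {for t, continuous (fun s => \row_i h i s : 'rV[R]_n)}.
Proof.
move=> hc; apply/cvgrPdist_le => e e0; near=> s.
rewrite [leLHS]/Num.Def.normr /= mx_normrE (bigmax_le _ (ltW e0)) //= => -[i j] _.
rewrite !mxE /=; move: j; near: s; apply: filter_forall => j.
exact: (cvgrPdist_le _ _).1 (hc j) e e0.
Unshelve. all: by end_near. Qed.

Lemma is_derive_coord n (z : R -> 'rV[R]_n) (t : R) (dz : 'rV[R]_n) i :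
  is_derive t 1 z dz -> is_derive t 1 (fun s => z s ord0 i) (dz ord0 i).
Proof.
move=> [z_der <-]; apply: DeriveDef; first exact: (derivable_mxP z t 1).1 z_der ord0 i.
by rewrite derive_mx // mxE.
Qed.

Lemma is_derive_row n (h : 'I_n -> R -> R) (dh : 'I_n -> R) (t : R) :
  (forall i, is_derive t 1 (h i) (dh i)) ->
  is_derive t 1 (fun s => \row_i h i s : 'rV[R]_n) (\row_i dh i).
Proof.
move=> h_der.
have coordE j : (fun s => (\row_i h i s : 'rV[R]_n) ord0 j) = h j.
  by apply/funext => s; rewrite mxE.
have row_der : derivable (fun s => \row_i h i s : 'rV[R]_n) t 1.
  by apply/derivable_mxP => i j; rewrite ord1 coordE; case: (h_der j).
apply: DeriveDef => //; rewrite derive_mx //; apply/matrixP => i j.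
by rewrite !mxE ord1 coordE; case: (h_der j).
Qed.

(* The mean value theorem is applied coordinatewise, whence the factor [n]. *)
Lemma mean_value_enorm n (z dz : R -> 'rV[R]_n) (w : 'rV[R]_n) t B :
  0 <= t -> {within `[0, t], continuous z} ->
  (forall s, 0 < s < t -> is_derive s 1 z (dz s)) ->
  (forall s, 0 < s < t -> enorm (dz s - w) <= B) ->
  enorm (z t - z 0 - t *: w) <= n%:R * (B * t).
Proof.
move=> t0 zc z_der dz_le; rewrite le0r in t0.
case/orP: t0 => [/eqP ->|tp].
  by rewrite subrr scale0r subr0 enorm0 !mulr0.
apply: enorm_le_coord => i; rewrite !mxE.
have coord_der s : s \in `]0, t[ -> is_derive s 1 (fun s => z s ord0 i) (dz s ord0 i).
  by rewrite in_itv /= => hs; apply: is_derive_coord; exact: z_der.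
have coord_cont : {within `[0, t], continuous (fun s => z s ord0 i)}.
  apply: (@within_continuous_comp _ _ _ _ z (fun v : 'rV[R]_n => v ord0 i)) => // v _.
  exact: coord_continuous.
have [c c_in ->] := MVT tp coord_der coord_cont.
rewrite subr0 [t * _]mulrC -mulrBl normrM (gtr0_norm tp) ler_pM2r //.
move: c_in; rewrite in_itv /= => /dz_le; apply: le_trans.
exact: coordB_le_enorm.
Qed.

(* Bootstrap: the times up to which [g <= c] form an interval whose supremum,
   by continuity and the hypothesis, can only be [T]. *)
Lemma bootstrap_le (g : R -> R) (T c : R) : 0 < c -> 0 <= T ->
  {within `[0, T], continuous g} ->
  (forall t, 0 <= t <= T -> (forall s, 0 <= s < t -> g s <= c) -> g t <= c / 2) ->
  forall t, 0 <= t <= T -> g t <= c / 2.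
Proof.
move=> c0 T0 gc step.
pose S := [set t | 0 <= t <= T /\ forall s, 0 <= s <= t -> g s <= c].
have S0 : S 0.
  split=> [|s /andP[s0 s0']]; first by rewrite lexx T0.
  have -> : s = 0 by apply/le_anti; rewrite s0 s0'.
  suff : g 0 <= c / 2 by lra.
  by apply: step => [|r /andP[r0 r_lt0]]; [rewrite lexx T0 | lra].
have S_sup : has_sup S by split; [exists 0 | exists T => t [/andP[]]].
set tau := sup S.
have tau0 : 0 <= tau := sup_upper_bound S_sup S0.
have tauT : tau <= T by apply: ge_sup; [exists 0 | move=> t [/andP[]]].
have below_tau s : 0 <= s < tau -> g s <= c.
  move=> /andP[s0 s_tau].
  have [t [_ St] lt_st] : exists2 t, S t & tau - (tau - s) < t.
    by apply: sup_adherent S_sup; rewrite subr_gt0.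
  by apply: St; rewrite s0 /=; apply: ltW; rewrite -/tau in lt_st; lra.
have g_tau : g tau <= c / 2 by apply: step; rewrite ?tau0.
suff tauE : tau = T.
  move=> t /andP[t0 tT]; apply: step => [|s /andP[s0 st]]; first by rewrite t0.
  by apply: below_tau; rewrite s0 tauE (lt_le_trans st).
apply/eqP; rewrite eq_le tauT /= leNgt; apply/negP => tau_T.
have tau_in : (`[0, T]%classic : set R) tau by rewrite /= in_itv /= tau0.
have := (subspace_continuousP _ _).1 gc tau tau_in.
move=> /cvgrPdist_lt /(_ (c / 2)) [|/= d d0 near_tau]; first lra.
pose t' := Num.min (tau + d / 2) T.
have t'_gt : tau < t' by rewrite lt_min tau_T andbT; lra.
have t'_le : t' <= tau + d / 2 /\ t' <= T by split; rewrite ge_min lexx ?orbT.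
have : S t'.
  split; first by apply/andP; split; lra.
  move=> s /andP[s0 st']; have [lt_s|tau_s] := ltP s tau.
    by apply: below_tau; rewrite s0.
  have s_in : (`[0, T]%classic : set R) s by rewrite /= in_itv /= s0; lra.
  have ball_s : ball tau d s by rewrite /ball /= distrC ger0_norm ?subr_ge0 //; lra.
  have := near_tau s ball_s s_in; rewrite /from_subspace distrC.
  by move=> /(le_lt_trans (ler_norm _)); lra.
by move=> /(sup_upper_bound S_sup); rewrite -/tau; lra.
Qed.

End RealAnalysis.

Section Primitive.
Variable R : realType.
Local Notation mu := (@lebesgue_measure R).
Implicit Types (h : R -> R).

Definition primitive h (t : R) : R := \int[mu]_(s in `[0, t]) h s.

Lemma continuous_integrable_itv h (a b : R) :
  continuous h -> mu.-integrable `[a, b] (EFin \o h).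
Proof.
move=> hc; apply: continuous_compact_integrable; first exact: segment_compact.
exact: continuous_subspaceT.
Qed.

Lemma normr_Rintegral_itv_le h (a b B : R) : continuous h -> a <= b ->
  (forall s, a <= s <= b -> `|h s| <= B) ->
  `|\int[mu]_(s in `[a, b]) h s| <= B * (b - a).
Proof.
move=> hc ab h_le.
have mu_ab : fine (mu `[a, b]) = b - a.
  rewrite lebesgue_measure_itv /= lte_fin; case: ltP => [//|ba].
  by rewrite (le_anti (andb_true_intro (conj ab ba))) subrr.
have cst_int (c : R) : mu.-integrable `[a, b] (EFin \o cst c).
  exact/continuous_integrable_itv/cst_continuous.
have h_int := continuous_integrable_itv a b hc.
rewrite ler_norml -mulNr -mu_ab -!Rintegral_cst //.
by apply/andP; split; apply: le_Rintegral => //; try exact: cst_int;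
  move=> s; rewrite /= in_itv /= => /h_le; rewrite ler_norml => /andP[].
Qed.

Lemma primitive0 h : primitive h 0 = 0.
Proof. by rewrite /primitive set_itv1 Rintegral_set1. Qed.

Lemma primitive_lt0 h t : t < 0 -> primitive h t = 0.
Proof. by move=> t0; rewrite /primitive set_itv_ge ?Rintegral_set0 // bnd_simp -ltNge. Qed.

Lemma normr_primitive_le h t B : continuous h -> 0 <= t ->
  (forall s, 0 <= s <= t -> `|h s| <= B) -> `|primitive h t| <= B * t.
Proof. by move=> hc t0 h_le; rewrite -[t in B * t]subr0; exact: normr_Rintegral_itv_le. Qed.

Lemma primitiveB h1 h2 t : continuous h1 -> continuous h2 ->
  primitive h1 t - primitive h2 t = primitive (fun s => h1 s - h2 s) t.
Proof. by move=> c1 c2; rewrite /primitive RintegralB //; exact: continuous_integrable_itv. Qed.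

Lemma primitive_lipschitz h B : continuous h -> (forall s, `|h s| <= B) ->
  forall t t', `|primitive h t - primitive h t'| <= B * `|t - t'|.
Proof.
move=> hc h_le.
have B0 : 0 <= B := le_trans (normr_ge0 _) (h_le 0).
suff le_ordered t t' : t <= t' -> `|primitive h t' - primitive h t| <= B * (t' - t).
  move=> t t'; have [tt'|t't] := leP t t'.
    by rewrite distrC [`|t - t'|]distrC [`|t' - t|]ger0_norm ?subr_ge0 ?le_ordered.
  by rewrite [`|t - t'|]ger0_norm ?subr_ge0 ?le_ordered // ltW.
move=> tt'; have [t'0|t'0] := ltP t' 0.
  by rewrite !primitive_lt0 ?(le_lt_trans tt') // subrr normr0 mulr_ge0 ?subr_ge0.
have [t0|t0] := ltP t 0.
  rewrite (primitive_lt0 _ t0) subr0 (le_trans (normr_primitive_le hc t'0 (fun s _ => h_le s))) //.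
  by rewrite ler_wpM2l // lerDl oppr_ge0 ltW.
rewrite /primitive Rintegral_itvB ?bnd_simp ?t0 //; last exact: continuous_integrable_itv.
rewrite Rintegral_itv_obnd_cbnd; first by apply: normr_Rintegral_itv_le => // s _; exact: h_le.
apply: integrableS (continuous_integrable_itv t t' hc) => //; exact: subset_itv_oc_cc.
Qed.

Lemma is_derive_primitive h (t T : R) : continuous h -> 0 < t < T ->
  is_derive t 1 (primitive h) (h t).
Proof.
move=> hc /andP[t0 tT].
have [prim_der prim_derE] :=
  continuous_FTC1_closed tT (continuous_integrable_itv 0 T hc) t0 (hc t).
by apply: DeriveDef; rewrite // -derive1E.
Qed.

End Primitive.

Section DyadicLimit.
Variable R : realType.

Lemma dyadic_le0 (z A : R) : 0 <= A -> (forall k, z <= A / 2 ^+ k) -> z <= 0.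
Proof.
move=> A0 z_le; rewrite leNgt; apply/negP => z0.
set k := Num.Def.archi_bound (A / z).
have Az_lt : A / z < k%:R := archi_boundP (divr_ge0 A0 (ltW z0)).
have pow_gt0 : 0 < (2 : R) ^+ k by rewrite exprn_gt0.
have k_le : (k%:R : R) <= 2 ^+ k by rewrite -natrX ler_nat ltnW // ltn_expl.
have := z_le k; rewrite ler_pdivlMr // => le_A.
rewrite ltr_pdivrMr // mulrC in Az_lt.
have : z * k%:R <= z * 2 ^+ k by rewrite ler_wpM2l // ltW.
lra.
Qed.

(* A sequence with [|a (k+1) - a k| <= D / 2^k] is Cauchy; its limit is the
   supremum of the nondecreasing lower envelopes [a k - 2 D / 2^k]. *)
Definition dyadic_lim (a : nat -> R) (D : R) : R :=
  sup (range (fun k => a k - 2 * D / 2 ^+ k)).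

Lemma dyadic_lim_dist (a : nat -> R) D : 0 <= D ->
  (forall k, `|a k.+1 - a k| <= D / 2 ^+ k) ->
  forall k, `|dyadic_lim a D - a k| <= 2 * D / 2 ^+ k.
Proof.
move=> D0 a_step.
pose e k : R := 2 * D / 2 ^+ k.
have e0 k : 0 <= e k by rewrite /e divr_ge0 ?mulr_ge0 ?exprn_ge0.
have eS k : e k = e k.+1 + D / 2 ^+ k.
  by rewrite /e exprS; field; rewrite expf_neq0 // pnatr_eq0.
have a_stepN k : - (D / 2 ^+ k) <= a k.+1 - a k <= D / 2 ^+ k by rewrite -ler_norml.
pose lo k := a k - e k.
pose hi k := a k + e k.
have lo_le : {homo lo : i j / (i <= j)%N >-> i <= j}.
  apply: (homo_leq (r := <=%R)) => [//|y x z|k]; first exact: le_trans.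
  by have := a_stepN k; rewrite /lo (eS k); lra.
have hi_ge : {homo hi : i j / (i <= j)%N >-> j <= i}.
  apply: (homo_leq (r := fun x y => y <= x)) => [//|y x z xy yz|k]; first exact: le_trans yz xy.
  by have := a_stepN k; rewrite /hi (eS k); lra.
have lo_hi k j : lo k <= hi j.
  have [kj|jk] := leqP k j.
    by apply: le_trans (lo_le _ _ kj) _; rewrite /lo /hi; have := e0 j; lra.
  by apply: le_trans (hi_ge _ _ (ltnW jk)); rewrite /lo /hi; have := e0 k; lra.
have lo_sup : has_sup (range lo).
  by split; [exists (lo 0%N), 0%N | exists (hi 0%N) => _ [j _ <-]; exact: lo_hi].
move=> k.
have lo_k : lo k <= dyadic_lim a D by apply: sup_upper_bound => //; exists k.
have hi_k : dyadic_lim a D <= hi k.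
  by apply: ge_sup => [|_ [j _ <-]]; [exists (lo 0%N), 0%N | exact: lo_hi].
by rewrite ler_norml; rewrite /lo /hi -/(e k) in lo_k hi_k *; apply/andP; split; lra.
Qed.

End DyadicLimit.

Section Clamp.
Variable R : realType.
Implicit Types lo hi a b : R.

Definition clamp lo hi a : R := if a < lo then lo else if hi < a then hi else a.

Lemma clamp_lipschitz lo hi a b : lo <= hi -> `|clamp lo hi a - clamp lo hi b| <= `|a - b|.
Proof.
move=> lohi; have := ler_norm (a - b); have : b - a <= `|a - b| by rewrite distrC ler_norm.
rewrite /clamp; case: (ltP a lo) => ?; case: (ltP hi a) => ?; case: (ltP b lo) => ?;
  case: (ltP hi b) => ? ? ?; rewrite ler_norml; apply/andP; split; lra.
Qed.

Lemma clamp_itv lo hi a : lo <= hi -> lo <= clamp lo hi a <= hi.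
Proof.
by move=> lohi; rewrite /clamp; case: (ltP a lo) => ?; case: (ltP hi a) => ?;
  apply/andP; split; lra.
Qed.

Lemma clamp_id lo hi a : lo <= a <= hi -> clamp lo hi a = a.
Proof. by move=> /andP[loa ahi]; rewrite /clamp ltNge loa /= ltNge ahi. Qed.

End Clamp.

Section PicardExistence.
Variables (R : realType) (n : nat) (g : 'rV[R]_n -> 'rV[R]_n) (xi : 'rV[R]_n).
Variables (L C r T : R).
Hypotheses (r_gt0 : 0 < r) (L_ge0 : 0 <= L) (C_ge0 : 0 <= C) (T_ge0 : 0 <= T).

Definition in_box (v : 'rV[R]_n) := forall i, `|v ord0 i - xi ord0 i| <= r.

Hypothesis g_lip : forall v w, in_box v -> in_box w ->
  enorm (g v - g w) <= L * enorm (v - w).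
Hypothesis g_bounded : forall v, in_box v -> enorm (g v) <= C.
Hypothesis TC_le : T * C <= r.
Hypothesis TL_le : n%:R * T * L <= 1 / 2.

Let box_itv i : xi ord0 i - r <= xi ord0 i + r.
Proof. by rewrite lerD2l lerNl (le_trans _ (ltW r_gt0)) // oppr_le0 ltW. Qed.

Let box_proj (v : 'rV[R]_n) : 'rV[R]_n :=
  \row_i clamp (xi ord0 i - r) (xi ord0 i + r) (v ord0 i).

Let box_proj_in v : in_box (box_proj v).
Proof. by move=> i; rewrite mxE distrC ler_distlC (clamp_itv _ (box_itv i)). Qed.

Let box_proj_id v : in_box v -> box_proj v = v.
Proof. by move=> v_in; apply/rowP => i; rewrite mxE clamp_id // -ler_distlC distrC. Qed.

Let box_proj_lip v w : enorm (box_proj v - box_proj w) <= enorm (v - w).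
Proof.
rewrite ler_sqrt ?sum_sqr_ge0 //; apply: ler_sum => i _; rewrite !mxE.
rewrite -(real_normK (num_real (_ - _))) -[leRHS](real_normK (num_real _)).
by rewrite ler_sqr ?nnegrE // clamp_lipschitz.
Qed.

(* [g] is extended to the whole space through the projection onto the box, so
   that the Picard operator is globally defined and contracting. *)
Let gext v := g (box_proj v).

Let gext_lip v w : enorm (gext v - gext w) <= L * enorm (v - w).
Proof.
exact: le_trans (g_lip (box_proj_in v) (box_proj_in w)) (ler_wpM2l L_ge0 (box_proj_lip v w)).
Qed.

Let gext_bounded v : enorm (gext v) <= C.
Proof. exact: g_bounded. Qed.

Let coord_lipschitz (y : R -> 'rV[R]_n) (k : R) :=
  forall i s t, `|y s ord0 i - y t ord0 i| <= k * `|s - t|.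

Let integrand (y : R -> 'rV[R]_n) (i : 'I_n) (s : R) : R := gext (y s) ord0 i.

Let integrand_bounded y i s : `|integrand y i s| <= C.
Proof. exact: le_trans (coord_le_enorm _ _) (gext_bounded _). Qed.

Let integrand_dist y1 y2 i s :
  `|integrand y1 i s - integrand y2 i s| <= L * enorm (y1 s - y2 s).
Proof. exact: le_trans (coordB_le_enorm _ _ i) (gext_lip _ _). Qed.

Let integrand_continuous y k i : 0 <= k -> coord_lipschitz y k -> continuous (integrand y i).
Proof.
move=> k0 y_lip; apply: (@lipschitz_continuous _ _ (L * (n%:R * k))) => s t.
apply: le_trans (integrand_dist _ _ _ _) _; rewrite -!mulrA; apply: ler_wpM2l => //.
by apply: enorm_le_coord => j; rewrite !mxE.
Qed.

Let picard (y : R -> 'rV[R]_n) (t : R) : 'rV[R]_n :=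
  \row_i (xi ord0 i + primitive (integrand y i) t).

Let picard0 y : picard y 0 = xi.
Proof. by apply/rowP => i; rewrite mxE primitive0 addr0. Qed.

Let picard_lip y k : 0 <= k -> coord_lipschitz y k -> coord_lipschitz (picard y) C.
Proof.
move=> k0 y_lip i s t; rewrite !mxE opprD addrACA subrr add0r.
exact: primitive_lipschitz (integrand_continuous k0 y_lip) (integrand_bounded y i) s t.
Qed.

Let picard_contraction y1 y2 d : coord_lipschitz y1 C -> coord_lipschitz y2 C ->
  (forall s, 0 <= s <= T -> enorm (y1 s - y2 s) <= d) ->
  forall t, 0 <= t <= T -> enorm (picard y1 t - picard y2 t) <= d / 2.
Proof.
move=> y1_lip y2_lip y12_le t /andP[t0 tT].
have d0 : 0 <= d by apply: le_trans (enorm_ge0 _) (y12_le 0 _); rewrite lexx.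
apply: le_trans (_ : n%:R * (L * d * T) <= _); last first.
  by have := ler_wpM2r d0 TL_le; lra.
apply: enorm_le_coord => i; rewrite !mxE opprD addrACA subrr add0r.
have c1 := integrand_continuous C_ge0 y1_lip (i := i).
have c2 := integrand_continuous C_ge0 y2_lip (i := i).
rewrite primitiveB //; apply: le_trans (_ : L * d * t <= _); last by rewrite ler_wpM2l // mulr_ge0.
apply: normr_primitive_le t0 _ => [s|s /andP[s0 st]].
  exact: (continuousB (c1 s) (c2 s)).
apply: le_trans (integrand_dist _ _ _ _) _; apply: ler_wpM2l => //.
by rewrite y12_le // s0 (le_trans st).
Qed.

Let iterate k : R -> 'rV[R]_n := iter k picard (fun _ => xi).

Let iterate_lip k : coord_lipschitz (iterate k) C.
Proof.
elim: k => [i s t|k IHk]; first by rewrite subrr normr0 mulr_ge0.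
exact: picard_lip C_ge0 IHk.
Qed.

Let D := n%:R * (C * T).

Let D_ge0 : 0 <= D.
Proof. by rewrite mulr_ge0 // mulr_ge0. Qed.

Let iterate_step k t : 0 <= t <= T -> enorm (iterate k.+1 t - iterate k t) <= D / 2 ^+ k.
Proof.
elim: k t => [|k IHk] t t_in.
  rewrite expr0 divr1; apply: enorm_le_coord => i; rewrite !mxE addrC addKr.
  case/andP: t_in => t0 tT; apply: le_trans (normr_primitive_le _ t0 _) _.
  - exact: integrand_continuous C_ge0 (iterate_lip 0).
  - by move=> s _; exact: integrand_bounded.
  - exact: ler_wpM2l.
apply: le_trans (picard_contraction (iterate_lip k.+1) (iterate_lip k) IHk t_in) _.
by rewrite exprS invfM mulrA mulrAC.
Qed.

Let limit_coord t i := dyadic_lim (fun k => iterate k t ord0 i) D.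

Let limit_coord_dist t i k : 0 <= t <= T ->
  `|limit_coord t i - iterate k t ord0 i| <= 2 * D / 2 ^+ k.
Proof.
move=> t_in; apply: (dyadic_lim_dist (a := fun k => iterate k t ord0 i) D_ge0) => j.
exact: le_trans (coordB_le_enorm _ _ i) (iterate_step j t_in).
Qed.

Let limit_coord_lip s t i : 0 <= s <= T -> 0 <= t <= T ->
  `|limit_coord s i - limit_coord t i| <= C * `|s - t|.
Proof.
move=> s_in t_in; rewrite -subr_le0; apply: (dyadic_le0 (A := 4 * D)) => [|k].
  by rewrite mulr_ge0.
have ds := limit_coord_dist i k s_in; have dt := limit_coord_dist i k t_in.
have lip := iterate_lip k i s t.
have := ler_normB (limit_coord s i - iterate k s ord0 i + (iterate k s ord0 i - iterate k t ord0 i))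
  (limit_coord t i - iterate k t ord0 i).
have := ler_normD (limit_coord s i - iterate k s ord0 i) (iterate k s ord0 i - iterate k t ord0 i).
have -> : 4 * D / 2 ^+ k = 2 * D / 2 ^+ k + 2 * D / 2 ^+ k by rewrite -mulrDl; congr (_ / _); ring.
have -> : limit_coord s i - iterate k s ord0 i + (iterate k s ord0 i - iterate k t ord0 i)
    - (limit_coord t i - iterate k t ord0 i) = limit_coord s i - limit_coord t i by ring.
lra.
Qed.

(* Time is clamped to [0, T] so that the limit is Lipschitz on the whole line. *)
Let limit (t : R) : 'rV[R]_n := \row_i limit_coord (clamp 0 T t) i.

Let limit_lip : coord_lipschitz limit C.
Proof.
move=> i s t; rewrite !mxE.
apply: le_trans (limit_coord_lip i (clamp_itv s T_ge0) (clamp_itv t T_ge0)) _.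
by rewrite ler_wpM2l // clamp_lipschitz.
Qed.

Let limit_dist k t : 0 <= t <= T -> enorm (limit t - iterate k t) <= n%:R * (2 * D / 2 ^+ k).
Proof.
by move=> t_in; apply: enorm_le_coord => i; rewrite !mxE clamp_id //; exact: limit_coord_dist.
Qed.

Let solution := picard limit.

Let solution_eq_limit t : 0 <= t <= T -> solution t = limit t.
Proof.
move=> t_in; apply/rowP => i; apply/eqP; rewrite -subr_eq0 -normr_le0.
apply: (dyadic_le0 (A := n%:R * D + D)) => [|k]; first by rewrite addr_ge0 ?mulr_ge0.
have near_sol := picard_contraction limit_lip (iterate_lip k) (@limit_dist k) t_in.
have := le_trans (coordB_le_enorm _ _ i) near_sol.
have := limit_coord_dist i k.+1 t_in; rewrite [limit t ord0 i]mxE clamp_id //.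
have pow_gt0 : 0 < (2 : R) ^+ k by rewrite exprn_gt0.
have -> : 2 * D / 2 ^+ k.+1 = D / 2 ^+ k by rewrite exprS; field; rewrite gt_eqF.
have -> : n%:R * (2 * D / 2 ^+ k) / 2 = n%:R * D / 2 ^+ k by field; rewrite gt_eqF.
rewrite mulrDl; set sol_i := solution t ord0 i; set it_i := iterate k.+1 t ord0 i.
have := ler_normB (sol_i - it_i) (limit_coord t i - it_i).
have -> : sol_i - it_i - (limit_coord t i - it_i) = sol_i - limit_coord t i by ring.
lra.
Qed.

Let solution_in_box t : 0 <= t <= T -> in_box (solution t).
Proof.
move=> /andP[t0 tT] i; rewrite mxE addrC addKr.
have := normr_primitive_le (integrand_continuous (i := i) C_ge0 limit_lip) t0
  (fun s _ => integrand_bounded limit i s); move/le_trans; apply.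
by apply: le_trans TC_le; rewrite mulrC ler_wpM2r.
Qed.

Lemma picard_existence : exists x : R -> 'rV[R]_n,
  [/\ x 0 = xi, {within `[0, T], continuous x} &
      forall t, 0 < t < T -> is_derive t 1 x (g (x t))].
Proof.
exists solution; split; first exact: picard0.
  apply: continuous_subspaceT => t; apply: continuous_row => i.
  apply: (@lipschitz_continuous _ _ C) => s t'.
  by have := picard_lip C_ge0 limit_lip i s t'; rewrite !mxE.
move=> t /andP[t0 tT].
have t_in : 0 <= t <= T by rewrite !ltW.
have -> : g (solution t) = \row_i integrand limit i t.
  apply/rowP => i; rewrite mxE /integrand /gext -solution_eq_limit // box_proj_id //.
  exact: solution_in_box.
apply: is_derive_row => i.
have := is_deriveD (is_derive_cst (xi ord0 i) t 1)
  (is_derive_primitive (integrand_continuous (i := i) C_ge0 limit_lip)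
    (andb_true_intro (conj t0 tT))).
by rewrite add0r.
Qed.

End PicardExistence.

Definition ball_lipschitz_bounded (R : realType) (n m : nat)
    (f : 'rV[R]_n -> 'rV[R]_m -> 'rV[R]_n) (u : 'rV[R]_m) (x : 'rV[R]_n) (L C : R) :=
  (forall y z, enorm (y - x) <= 1 -> enorm (z - x) <= 1 ->
     enorm (f y u - f z u) <= L * enorm (y - z)) /\
  (forall y, enorm (y - x) <= 1 -> enorm (f y u) <= C).

Lemma itv_closedE (R : realType) (T : R) : [set t : R | 0 <= t <= T] = `[0, T]%classic.
Proof. by apply/seteqP; split => t /=; rewrite in_itv. Qed.

Section ExactModelLocalError.
Variables (R : realType) (n m : nat) (f : 'rV[R]_n -> 'rV[R]_m -> 'rV[R]_n).
Variables (u : 'rV[R]_m) (x : 'rV[R]_n) (L C T : R).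
Hypotheses (L_ge0 : 0 <= L) (C_ge0 : 0 <= C) (T_gt0 : 0 < T).
Hypothesis f_reg : ball_lipschitz_bounded f u x L C.
Hypothesis T_small : 8 * (n%:R + 1) * (L + C) * T <= 1.

Let f_lip := f_reg.1.
Let f_bounded := f_reg.2.

Let fx_le : enorm (f x u) <= C.
Proof. by apply: f_bounded; rewrite subrr enorm0. Qed.

Let TL_le : 4 * n%:R * T * L <= 1.
Proof.
have := T_small; have : 0 <= n%:R * C * T by rewrite !mulr_ge0 // ltW.
have : 0 <= L * T by rewrite mulr_ge0 // ltW.
have : 0 <= C * T by rewrite mulr_ge0 // ltW.
lra.
Qed.

Let TC_le : 8 * (n%:R + 1) * T * C <= 1.
Proof.
have := T_small; have : 0 <= (n%:R + 1) * L * T by rewrite !mulr_ge0 ?addr_ge0 // ltW.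
lra.
Qed.

Lemma exact_solution_exists : exists y, is_solution f x u T y.
Proof.
have n1 : 0 < n%:R + 1 :> R by rewrite ltr_pwDr.
pose r : R := (n%:R + 1)^-1.
have box_ball v : in_box x r v -> enorm (v - x) <= 1.
  move=> v_in; have : enorm (v - x) <= n%:R * r.
    by apply: enorm_le_coord => i; rewrite !mxE; exact: v_in.
  by move/le_trans; apply; rewrite /r ler_pdivrMr // mul1r lerDl.
have r_gt0 : 0 < r by rewrite invr_gt0.
have g_lip v w : in_box x r v -> in_box x r w -> enorm (f v u - f w u) <= L * enorm (v - w).
  by move=> /box_ball v_in /box_ball w_in; exact: f_lip.
have g_bounded v : in_box x r v -> enorm (f v u) <= C by move=> /box_ball; exact: f_bounded.
have TC_r : T * C <= r.
  rewrite /r -[_^-1]mul1r ler_pdivlMr //; have := TC_le.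
  have : 0 <= (n%:R + 1) * T * C by rewrite !mulr_ge0 ?addr_ge0 // ltW.
  lra.
have TL_half : n%:R * T * L <= 1 / 2 by have := TL_le; lra.
have [y [y0 yc y_der]] :=
  @picard_existence R n (f^~ u) x L C r T r_gt0 L_ge0 C_ge0 (ltW T_gt0)
    g_lip g_bounded TC_r TL_half.
by exists y; split; rewrite ?itv_closedE.
Qed.

Lemma exact_solution_near y : is_solution f x u T y ->
  forall t, 0 <= t <= T -> enorm (y t - x) <= 2 * n%:R * T * enorm (f x u).
Proof.
case=> y0 yc y_der; rewrite itv_closedE in yc.
have fx_ge0 := enorm_ge0 (f x u).
suff near_eps eps : 0 < eps -> eps <= 1 / 2 ->
    forall t, 0 <= t <= T -> enorm (y t - x) <= (4 * n%:R * T * enorm (f x u) + eps) / 2.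
  move=> t t_in; apply/ler_addgt0Pr => e e0.
  have [min_le min_le_half] : Num.min (2 * e) (1 / 2) <= 2 * e /\ Num.min (2 * e) (1 / 2) <= 1 / 2.
    by split; rewrite ge_min lexx ?orbT.
  have min_gt0 : 0 < Num.min (2 * e) (1 / 2) by rewrite lt_min; apply/andP; split; lra.
  by have := near_eps _ min_gt0 min_le_half t t_in; lra.
move=> eps_gt0 eps_le.
set c := 4 * n%:R * T * enorm (f x u) + eps.
have c_gt0 : 0 < c by rewrite /c ltr_wpDl // !mulr_ge0 // ltW.
have c_le1 : c <= 1.
  have : 4 * n%:R * T * enorm (f x u) <= 4 * n%:R * T * C.
    by rewrite ler_wpM2l ?mulr_ge0 ?fx_le // ltW.
  have := TC_le; have : 0 <= T * C by rewrite mulr_ge0 // ltW.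
  rewrite /c; lra.
apply: (bootstrap_le c_gt0 (ltW T_gt0) (within_continuous_enorm (x0 := x) yc)).
move=> t /andP[t0 tT] y_le.
have f_y_le s : 0 < s < t -> enorm (f (y s) u - 0) <= enorm (f x u) + L * c.
  move=> /andP[s0 st]; rewrite subr0.
  have ys_le : enorm (y s - x) <= c by apply: y_le; rewrite st ltW.
  have ys_near : enorm (y s - x) <= 1 by lra.
  have x_near : enorm (x - x) <= 1 by rewrite subrr enorm0.
  have := enormD (f (y s) u - f x u) (f x u); rewrite subrK addrC => /le_trans; apply.
  by rewrite lerD2l (le_trans (f_lip ys_near x_near)) // ler_wpM2l.
have yc_t : {within `[0, t], continuous y}.
  by apply: continuous_subspaceW yc => s /=; rewrite !in_itv /= => /andP[-> /le_trans ->].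
have y_der_t s : 0 < s < t -> is_derive s 1 y (f (y s) u).
  by case/andP=> s0 st; apply: y_der; rewrite s0 (lt_le_trans st).
have := mean_value_enorm t0 yc_t y_der_t f_y_le.
rewrite scaler0 subr0 y0 => /le_trans; apply.
have : n%:R * ((enorm (f x u) + L * c) * t) <= n%:R * ((enorm (f x u) + L * c) * T).
  by rewrite ler_wpM2l // ler_wpM2l // addr_ge0 // mulr_ge0 // ltW.
have : 4 * n%:R * T * L * c <= 1 * c by rewrite ler_wpM2r // ltW.
rewrite /c; lra.
Qed.

Lemma exact_model_local_error :
  enorm (exact_model f x u T - x - T *: f x u) <= 2 * n%:R ^+ 2 * L * T ^+ 2 * enorm (f x u).
Proof.
rewrite /exact_model; case: pselect => [y_ex|]; last by move/(_ exact_solution_exists).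
case: (cid y_ex) => y y_sol /=; have [y0 yc y_der] := y_sol.
have f_y_le s : 0 < s < T -> enorm (f (y s) u - f x u) <= L * (2 * n%:R * T * enorm (f x u)).
  move=> /andP[s0 sT].
  have ys_le := exact_solution_near y_sol (andb_true_intro (conj (ltW s0) (ltW sT))).
  have near1 : 2 * n%:R * T * enorm (f x u) <= 1.
    have : 2 * n%:R * T * enorm (f x u) <= 2 * n%:R * T * C by rewrite ler_wpM2l ?mulr_ge0 // ltW.
    have := TC_le; have : 0 <= T * C by rewrite mulr_ge0 // ltW.
    lra.
  have ys_near : enorm (y s - x) <= 1 by lra.
  have x_near : enorm (x - x) <= 1 by rewrite subrr enorm0.
  exact: le_trans (f_lip ys_near x_near) (ler_wpM2l L_ge0 ys_le).
rewrite itv_closedE in yc.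
have := mean_value_enorm (ltW T_gt0) yc y_der f_y_le; rewrite y0 => /le_trans; apply.
by rewrite le_eqVlt; apply/orP; left; apply/eqP; ring.
Qed.

End ExactModelLocalError.

Definition rk_anorm (R : realType) (s : nat) (a : nat -> nat -> R) : R :=
  \sum_(i < s) \sum_(j < i) `|a i j|.

Definition rk_bnorm (R : realType) (s : nat) (b : nat -> R) : R := \sum_(i < s) `|b i|.

Lemma rk_anorm_ge0 (R : realType) s (a : nat -> nat -> R) : 0 <= rk_anorm s a.
Proof. by rewrite sumr_ge0 // => i _; rewrite sumr_ge0. Qed.

Lemma rk_bnorm_ge0 (R : realType) s (b : nat -> R) : 0 <= rk_bnorm s b.
Proof. by rewrite sumr_ge0. Qed.

Section RungeKuttaStages.
Variables (R : realType) (n m : nat) (f : 'rV[R]_n -> 'rV[R]_m -> 'rV[R]_n).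
Variables (a : nat -> nat -> R) (x : 'rV[R]_n) (u : 'rV[R]_m) (T : R).

Local Notation stages := (rk_stages f a x u T).

Lemma size_rk_stages k : size (stages k) = k.
Proof. by elim: k => //= k IHk; rewrite size_rcons IHk. Qed.

Lemma nth_rk_stages k k' j : (j < k)%N -> (k <= k')%N -> nth 0 (stages k') j = nth 0 (stages k) j.
Proof.
move=> jk; elim: k' => [|k' IHk']; first by rewrite leqn0 => /eqP k0; rewrite k0 in jk.
rewrite leq_eqVlt => /predU1P[<- //|]; rewrite ltnS => kk'.
by rewrite /= nth_rcons size_rk_stages (leq_trans jk kk') IHk'.
Qed.

Lemma rk_stageE s i : (i < s)%N ->
  nth 0 (stages s) i = x + T *: \sum_(j < i) (a i j *: f (nth 0 (stages s) j) u).
Proof.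
move=> lt_is; rewrite (nth_rk_stages (ltnSn i) lt_is) /= nth_rcons size_rk_stages ltnn eqxx.
by congr (_ + _ *: _); apply: eq_bigr => j _; rewrite (nth_rk_stages (ltn_ord j) (ltnW lt_is)).
Qed.

End RungeKuttaStages.

Section RungeKuttaLocalError.
Variables (R : realType) (n m : nat) (f : 'rV[R]_n -> 'rV[R]_m -> 'rV[R]_n).
Variables (u : 'rV[R]_m) (x : 'rV[R]_n) (s : nat) (a : nat -> nat -> R) (b : nat -> R).
Variables (L C T : R).
Hypotheses (L_ge0 : 0 <= L) (C_ge0 : 0 <= C) (T_ge0 : 0 <= T).
Hypothesis f_reg : ball_lipschitz_bounded f u x L C.
Hypothesis T_small : 2 * rk_anorm s a * (L + C) * T <= 1.

Local Notation stage i := (nth 0 (rk_stages f a x u T s) i).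
Local Notation A := (rk_anorm s a).


Let A_ge0 : 0 <= A := rk_anorm_ge0 s a.

Let row_le_A i : (i < s)%N -> \sum_(j < i) `|a i j| <= A.
Proof.
move=> lt_is; rewrite /rk_anorm (bigD1 (Ordinal lt_is)) //= lerDl.
by rewrite sumr_ge0 // => k _; rewrite sumr_ge0.
Qed.

Let stage_radius_le1 : 2 * T * A * enorm (f x u) <= 1.
Proof.
have : 2 * T * A * enorm (f x u) <= 2 * T * A * C.
  by rewrite ler_wpM2l ?mulr_ge0 ?A_ge0 // f_reg.2 // subrr enorm0.
have := T_small; have : 0 <= A * L * T by rewrite !mulr_ge0.
lra.
Qed.

Let f_near y : enorm (y - x) <= 2 * T * A * enorm (f x u) ->
  enorm (f y u - f x u) <= L * (2 * T * A * enorm (f x u)).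
Proof.
move=> y_near; apply: le_trans (f_reg.1 _ _ _ _) (ler_wpM2l L_ge0 y_near).
- exact: le_trans y_near stage_radius_le1.
- by rewrite subrr enorm0.
Qed.

Lemma rk_stage_near i : (i < s)%N -> enorm (stage i - x) <= 2 * T * A * enorm (f x u).
Proof.
have fx_ge0 := enorm_ge0 (f x u).
have LA_le : 2 * L * T * A <= 1.
  have := T_small; have : 0 <= A * C * T by rewrite !mulr_ge0.
  lra.
elim/ltn_ind: i => i IHi lt_is.
have f_stage_le j : (j < i)%N -> enorm (f (stage j) u) <= 2 * enorm (f x u).
  move=> ji; have := f_near (IHi j ji (ltn_trans ji lt_is)).
  have := enormD (f (stage j) u - f x u) (f x u); rewrite subrK.
  have : L * (2 * T * A * enorm (f x u)) <= 1 * enorm (f x u).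
    by rewrite (_ : L * _ = 2 * L * T * A * enorm (f x u)) ?ler_wpM2r //; ring.
  lra.
rewrite rk_stageE // addrC addKr enormZ (ger0_norm T_ge0).
apply: le_trans (_ : T * \sum_(j < i) (`|a i j| * (2 * enorm (f x u))) <= _).
  rewrite ler_wpM2l //; apply: le_trans (enorm_sum _) _; apply: ler_sum => j _.
  by rewrite enormZ ler_wpM2l // f_stage_le.
rewrite -mulr_suml (_ : 2 * T * A * _ = T * (A * (2 * enorm (f x u)))); last by ring.
by rewrite ler_wpM2l // ler_wpM2r ?mulr_ge0 // row_le_A.
Qed.

Lemma rk_model_local_error : rk_consistent s b ->
  enorm (rk_model f s a b x u T - x - T *: f x u)
    <= 2 * L * A * rk_bnorm s b * T ^+ 2 * enorm (f x u).
Proof.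
move=> consistent.
have -> : rk_model f s a b x u T - x - T *: f x u
    = T *: \sum_(i < s) b i *: (f (stage i) u - f x u).
  rewrite /rk_model (addrC x) addrK -scalerBr; congr (_ *: _).
  under [RHS]eq_bigr do rewrite scalerBr.
  by rewrite sumrB -scaler_suml consistent scale1r.
rewrite enormZ ger0_norm //.
apply: le_trans (_ : T * \sum_(i < s) (`|b i| * (L * (2 * T * A * enorm (f x u)))) <= _).
  rewrite ler_wpM2l //; apply: le_trans (enorm_sum _) _; apply: ler_sum => i _.
  by rewrite enormZ ler_wpM2l // f_near // rk_stage_near.
by rewrite -mulr_suml /rk_bnorm le_eqVlt; apply/orP; left; apply/eqP; ring.
Qed.

End RungeKuttaLocalError.

Section OneStep.
Variables (R : realType) (n m : nat) (f : 'rV[R]_n -> 'rV[R]_m -> 'rV[R]_n).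
Variables (s : nat) (a : nat -> nat -> R) (b : nat -> R) (L C : R).
Hypotheses (L0 : 0 <= L) (C0 : 0 <= C) (consistent : rk_consistent s b).

Let A0 := rk_anorm_ge0 s a.
Let B0 := rk_bnorm_ge0 s b.

Lemma rk_exact_model_dist (xa xb : 'rV[R]_n) (ua ub : 'rV[R]_m) (K T : R) :
  0 < T -> (8 * (n%:R + 1) + 2 * rk_anorm s a) * (L + C) * T <= 1 ->
  ball_lipschitz_bounded f ua xa L C -> ball_lipschitz_bounded f ub xb L C ->
  enorm (f xa ua - f xb ub) <= K * enorm (xa - xb) ->
  enorm (rk_model f s a b xa ua T - exact_model f xb ub T)
    <= (1 + K * T) * enorm (xa - xb)
       + 2 * (rk_anorm s a * rk_bnorm s b + n%:R ^+ 2) * L * T ^+ 2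
         * (enorm (f xa ua) + enorm (f xb ub)).
Proof.
move=> T0 T_small fa_reg fb_reg f_lip.
have LCT0 : 0 <= (n%:R + 1) * ((L + C) * T) by rewrite !mulr_ge0 ?addr_ge0 // ltW.
have rk_small : 2 * rk_anorm s a * (L + C) * T <= 1 by lra.
have ex_small : 8 * (n%:R + 1) * (L + C) * T <= 1.
  have : 0 <= rk_anorm s a * ((L + C) * T) by rewrite !mulr_ge0 ?addr_ge0 // ltW.
  lra.
have rk_err := rk_model_local_error L0 C0 (ltW T0) fa_reg rk_small consistent.
have ex_err := exact_model_local_error L0 C0 T0 fb_reg ex_small.
have -> : rk_model f s a b xa ua T - exact_model f xb ub T
    = (xa - xb) + T *: (f xa ua - f xb ub)
      + (rk_model f s a b xa ua T - xa - T *: f xa ua)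
      - (exact_model f xb ub T - xb - T *: f xb ub).
  by apply/rowP => i; rewrite !mxE; ring.
apply: le_trans (enormD _ _) _; rewrite enormN.
apply: le_trans (lerD (enormD _ _) (lexx _)) _.
apply: le_trans (lerD (lerD (enormD _ _) (lexx _)) (lexx _)) _.
rewrite enormZ (gtr0_norm T0).
have := ler_wpM2l (ltW T0) f_lip.
have fa0 := enorm_ge0 (f xa ua); have fb0 := enorm_ge0 (f xb ub).
have : 0 <= rk_anorm s a * rk_bnorm s b * (L * T ^+ 2) * enorm (f xb ub).
  by rewrite !mulr_ge0 // ltW.
have : 0 <= n%:R ^+ 2 * (L * T ^+ 2) * enorm (f xa ua) by rewrite !mulr_ge0 // ltW.
lra.
Qed.

Lemma rk_exact_model_step : exists c T0 : R, [/\ 0 < c, 0 < T0 &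
  forall (xa xb : 'rV[R]_n) (ua ub : 'rV[R]_m) (K T F : R), 0 < T < T0 ->
  ball_lipschitz_bounded f ua xa L C -> ball_lipschitz_bounded f ub xb L C ->
  enorm (f xa ua - f xb ub) <= K * enorm (xa - xb) ->
  enorm (f xa ua) <= F -> enorm (f xb ub) <= F ->
  enorm (rk_model f s a b xa ua T - exact_model f xb ub T)
    <= (1 + K * T) * enorm (xa - xb) + T * (c * T) * F].
Proof.
pose Q := (8 * (n%:R + 1) + 2 * rk_anorm s a) * (L + C) + 1.
have Q_gt0 : 0 < Q by apply: ltr_wpDl => //; rewrite !(mulr_ge0, addr_ge0).
pose c0 := 2 * (rk_anorm s a * rk_bnorm s b + n%:R ^+ 2) * L.
have c0_ge0 : 0 <= c0 by rewrite !(mulr_ge0, addr_ge0, exprn_ge0).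
exists (2 * c0 + 1), Q^-1.
split; [by apply: ltr_wpDl => //; rewrite mulr_ge0 | by rewrite invr_gt0 |].
move=> xa xb ua ub K T F /andP[T0 TQ] fa_reg fb_reg f_lip fa_le fb_le.
apply: le_trans (rk_exact_model_dist T0 _ fa_reg fb_reg f_lip) _.
  apply: le_trans (_ : Q * T <= 1); last by rewrite -ler_pdivlMl // mulr1 ltW.
  by apply: ler_wpM2r; [exact: ltW | rewrite /Q lerDl].
rewrite lerD2l -/c0.
have := ler_wpM2l (mulr_ge0 c0_ge0 (sqr_ge0 T)) (lerD fa_le fb_le).
have : 0 <= T ^+ 2 * F by rewrite mulr_ge0 ?sqr_ge0 // (le_trans (enorm_ge0 _) fa_le).
lra.
Qed.

End OneStep.

Section ClosedLoop.
Variable R : realType.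

Lemma Kinf_ge0 (phi : R -> R) r : Kinf phi -> 0 <= r -> 0 <= phi r.
Proof.
case=> _ phi_incr phi0 _; rewrite le0r => /predU1P[->|r_gt0]; first by rewrite phi0.
by rewrite -phi0 ltW // phi_incr.
Qed.

Lemma Kinf_linear (c : R) : 0 < c -> Kinf (fun t => c * t).
Proof.
move=> c0; split; [|by move=> r t _ rt; rewrite ltr_pM2l|by rewrite mulr0|].
  apply: continuous_subspaceT; apply: (@lipschitz_continuous _ _ c) => r t.
  by rewrite -mulrBr normrM (gtr0_norm c0).
move=> d; exists ((`|d| + 1) / c); split; first by rewrite divr_ge0 // ?addr_ge0 // ltW.
by rewrite mulrC divfK ?gt_eqF // (le_lt_trans (ler_norm d)) // ltrDl.
Qed.

Lemma enorm_le_affine (n k : nat) (F : 'rV[R]_n -> 'rV[R]_k) x (K r p : R) :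
  0 <= K -> 0 <= p -> enorm x <= r ->
  enorm (F x - F 0) <= K * enorm (x - 0) -> enorm (F 0) <= p ->
  enorm (F x) <= (K + 1) * (r + p).
Proof.
move=> K0 p0 x_le F_lip F0_le; rewrite subr0 in F_lip.
apply: le_trans (_ : K * r + p <= _); last first.
  have r0 := le_trans (enorm_ge0 x) x_le.
  by have := mulr_ge0 K0 p0; lra.
rewrite -(subrK (F 0) (F x)) (le_trans (enormD _ _)) // lerD //.
exact: le_trans F_lip (ler_wpM2l K0 x_le).
Qed.

Lemma ball_lipschitz_bounded_in_ball (n m : nat) (f : 'rV[R]_n -> 'rV[R]_m -> 'rV[R]_n)
    (M Cu C : R) :
  (forall (X : set 'rV[R]_n) (Us : set 'rV[R]_m), compact X -> compact Us ->
     exists L : R, 0 < L /\ forall x y u, X x -> X y -> Us u ->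
       enorm (f x u - f y u) <= L * enorm (x - y)) ->
  (forall x u, enorm x <= M + 1 -> enorm u <= Cu -> enorm (f x u) <= C) ->
  exists L : R, 0 < L /\ forall x u, enorm x <= M -> enorm u <= Cu ->
    ball_lipschitz_bounded f u x L C.
Proof.
move=> f_lip f_bd.
have box_compact k (B : R) : compact [set v : 'rV[R]_k | forall i, `[- B, B]%classic (v ord0 i)].
  by apply: (rV_compact (A := fun _ => `[- B, B]%classic)) => i; exact: segment_compact.
have in_box k (v : 'rV[R]_k) B : enorm v <= B -> forall i, `[- B, B]%classic (v ord0 i).
  by move=> v_le i; rewrite /= in_itv /= -ler_norml (le_trans (coord_le_enorm v i)).
have [L [L_gt0 L_lip]] := f_lip _ _ (box_compact n (M + 1)) (box_compact m Cu).
exists L; split=> // x u x_le u_le.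
have near_x y : enorm (y - x) <= 1 -> enorm y <= M + 1.
  by move=> y_near; rewrite -(subrK x y) (le_trans (enormD _ _)) // addrC lerD.
split=> [y z /near_x/in_box y_in /near_x/in_box z_in|y /near_x y_le]; last exact: f_bd.
exact: L_lip y_in z_in (in_box _ _ _ u_le).
Qed.

End ClosedLoop.

Theorem theorem3 (R : realType) (n m q : nat)
  (f : 'rV[R]_n -> 'rV[R]_m -> 'rV[R]_n)
  (U : 'rV[R]_n -> 'rV[R]_q -> R -> 'rV[R]_m)
  (s : nat) (a : nat -> nat -> R) (b : nat -> R) :
  (* (A1) local Lipschitz in x uniformly in u *)
  (forall (X : set 'rV[R]_n) (Us : set 'rV[R]_m), compact X -> compact Us ->
     exists L : R, 0 < L /\ forall x y u, X x -> X y -> Us u ->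
       enorm (f x u - f y u) <= L * enorm (x - y)) ->
  (* (A2) local boundedness *)
  (exists Cf : R -> R -> R,
     (forall M Cu, 0 <= M -> 0 <= Cu -> 0 < Cf M Cu) /\
     (forall M M' Cu Cu', 0 <= M -> M <= M' -> 0 <= Cu -> Cu <= Cu' ->
        Cf M Cu <= Cf M' Cu') /\
     (forall M Cu, 0 <= M -> 0 <= Cu -> forall x u,
        enorm x <= M -> enorm u <= Cu -> enorm (f x u) <= Cf M Cu)) ->
  (* (A3) small-time locally uniform boundedness of U *)
  (exists Tu Cu : R -> R -> R,
     (forall M E, 0 <= M -> 0 <= E -> 0 < Tu M E /\ 0 < Cu M E) /\
     (forall M M' E E', 0 <= M -> M <= M' -> 0 <= E -> E <= E' ->
        Tu M' E' <= Tu M E /\ Cu M E <= Cu M' E') /\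
     (forall M E, 0 <= M -> 0 <= E -> forall x e T,
        enorm x <= M -> enorm e <= E -> 0 < T < Tu M E ->
        enorm (U x e T) <= Cu M E)) ->
  (* (i) *)
  (exists phi : R -> R, Kinf phi /\
     forall E, 0 <= E -> exists Ti : R, 0 < Ti /\
       forall e T, enorm e <= E -> 0 < T < Ti ->
         enorm (f 0 (U 0 e T)) <= phi (enorm e)) ->
  (* (ii) *)
  (exists K Tii : R -> R -> R,
     (forall M E, 0 <= M -> 0 <= E -> 0 < K M E /\ 0 < Tii M E) /\
     (forall M M' E E', 0 <= M -> M <= M' -> 0 <= E -> E <= E' ->
        K M E <= K M' E' /\ Tii M' E' <= Tii M E) /\
     (forall M E, 0 <= M -> 0 <= E -> forall xa xb e T,
        enorm xa <= M -> enorm xb <= M -> enorm e <= E -> 0 < T < Tii M E ->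
        enorm (f xa (U xa e T) - f xb (U xb e T)) <= K M E * enorm (xa - xb))) ->
  (* explicit consistent RK model *)
  rk_consistent s b ->
  REPC (fun x e T => rk_model f s a b x (U x e T) T)
       (fun x e T => exact_model f x (U x e T) T).
Proof.
move=> A1 [Cf [Cf_gt0 [_ f_bd]]] [Tu [Cu [TuCu_gt0 [_ U_bd]]]]
  [phi [phiK U0_le]] [K [Tii [KTii_gt0 [_ U_lip]]]] consistent.
exists phi; split=> // M E M0 E0.
have [[Tu_gt0 Cu_gt0] [K_gt0 Tii_gt0]] := (TuCu_gt0 M E M0 E0, KTii_gt0 M E M0 E0).
have [Ti [Ti_gt0 {}U0_le]] := U0_le E E0.
have M1_ge0 : 0 <= M + 1 by rewrite addr_ge0.
have C_gt0 := Cf_gt0 _ _ M1_ge0 (ltW Cu_gt0).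
have [L [L_gt0 reg]] := ball_lipschitz_bounded_in_ball A1 (f_bd _ _ M1_ge0 (ltW Cu_gt0)).
have [c [T0 [c_gt0 T0_gt0 step]]] := rk_exact_model_step f a (ltW L_gt0) (ltW C_gt0) consistent.
exists (K M E), (Num.min (Num.min (Tu M E) (Tii M E)) (Num.min Ti T0)),
  (fun T => c * (K M E + 1) * T).
split=> //; split; first by rewrite !lt_min Tu_gt0 Tii_gt0 Ti_gt0.
split; first by apply: Kinf_linear; rewrite mulr_gt0 // ltr_wpDl // ltW.
move=> xa xb e T xa_le xb_le e_le /andP[T_gt0].
rewrite !lt_min => /andP[/andP[TTu TTii] /andP[TTi TT0]].
have [T_Tu T_Tii] : 0 < T < Tu M E /\ 0 < T < Tii M E by rewrite T_gt0.
have field_le x : enorm x <= M -> enorm x <= Num.max (enorm xa) (enorm xb) ->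
    enorm (f x (U x e T)) <= (K M E + 1) * (Num.max (enorm xa) (enorm xb) + phi (enorm e)).
  move=> x_le x_max.
  apply: (enorm_le_affine (F := fun y => f y (U y e T))) x_max _ _; first exact: ltW.
  - by apply: Kinf_ge0; rewrite ?enorm_ge0.
  - by apply: U_lip; rewrite ?enorm0.
  - by apply: U0_le; rewrite ?T_gt0.
have [xa_max xb_max] : enorm xa <= Num.max (enorm xa) (enorm xb) /\
    enorm xb <= Num.max (enorm xa) (enorm xb) by rewrite !le_max !lexx orbT.
apply: le_trans (step _ _ _ _ _ T _ _
  (reg _ _ xa_le (U_bd _ _ M0 E0 _ _ _ xa_le e_le T_Tu))
  (reg _ _ xb_le (U_bd _ _ M0 E0 _ _ _ xb_le e_le T_Tu))
  (U_lip _ _ M0 E0 _ _ _ _ xa_le xb_le e_le T_Tii)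
  (field_le _ xa_le xa_max) (field_le _ xb_le xb_max)) _.
  by rewrite T_gt0.
by rewrite lerD2l le_eqVlt; apply/orP; left; apply/eqP; ring.
Qed.
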